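(* Let $d\ge 1$ and $L_{2d}=2U\oplus 2E_8(-1)\oplus\langle -2d\rangle$. Let $r\in L_{2d}$ be a primitive vector such that the reflection $\sigma_r\colon l\mapsto l-\frac{2(l,r)}{(r,r)}r$ lies in $\mathrm O(L_{2d})$. Then $\sigma_r$ induces $\pm\mathrm{id}$ on the discriminant group $L_{2d}^\vee/L_{2d}$ if and only if either $r^2=\pm2$, or $r^2=\pm 2d$ and $\mathrm{div}(r)\in\{d,2d\}$.
   Context: $U$ is the hyperbolic plane, $E_8(-1)$ the negative definite $E_8$ lattice, $\langle -2d\rangle$ the rank one lattice with generator of square $-2d$. For $l\in L$, $\mathrm{div}(l)$ is the positive generator of the ideal $(l,L)\subset\mathbb Z$. *)

From HB Require Import structures.
From mathcomp Require Import all_boot all_order all_algebra.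
Set Implicit Arguments. Unset Strict Implicit. Unset Printing Implicit Defensive.
Import Order.TTheory GRing.Theory Num.Theory.
Local Open Scope ring_scope.

(* The lattice L_{2d} = 2U (+) 2E_8(-1) (+) <-2d> is modelled as Z^21 sitting
   inside Q^21 (column vectors 'cV[rat]_21) with the Gram matrix below.
   Coordinates: 0,1 : first U; 2,3 : second U; 4..11 : first E_8(-1);
   12..19 : second E_8(-1); 20 : <-2d>. *)

(* Adjacency of the E_8 Dynkin diagram on nodes 0..7: chain 0-1-2-3-4-5-6,
   node 7 attached to node 4 (arms of lengths 4,2,1 from node 4). *)
Definition e8_adj (i j : nat) : bool :=
  [|| ((i.+1 == j) && (j <= 6))%N, ((j.+1 == i) && (i <= 6))%N,
      ((i == 4) && (j == 7))%N | ((i == 7) && (j == 4))%N].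

Definition gram_entry (d : nat) (i j : nat) : int :=
  if (i == j)%N then
    (if (i < 4)%N then 0 else if (i < 20)%N then - 2%:Z else - (2 * d)%:Z)
  else if (i < 4)%N then
    (if ((j < 4) && (i./2 == j./2))%N then 1 else 0)
  else if [&& (i < 20)%N, (j < 20)%N, (4 <= j)%N & ((i < 12) == (j < 12))%N]
  then (if e8_adj ((i - 4) %% 8) ((j - 4) %% 8) then 1 else 0)
  else 0.

Definition gram (d : nat) : 'M[rat]_21 :=
  \matrix_(i, j) (gram_entry d i j)%:~R.

Definition bil (d : nat) (x y : 'cV[rat]_21) : rat := (x^T *m gram d *m y) 0 0.

Definition inL (x : 'cV[rat]_21) : Prop := forall i, x i 0 \is a Num.int.

Definition inLdual (d : nat) (x : 'cV[rat]_21) : Prop :=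
  forall l, inL l -> bil d x l \is a Num.int.

Definition primitive (r : 'cV[rat]_21) : Prop :=
  inL r /\ r != 0 /\
  forall (k : rat) (v : 'cV[rat]_21), k \is a Num.int -> inL v -> r = k *: v ->
    `|k| = 1.

Definition refl (d : nat) (r l : 'cV[rat]_21) : 'cV[rat]_21 :=
  l - (2 * bil d l r / bil d r r) *: r.

Definition refl_in_OL (d : nat) (r : 'cV[rat]_21) : Prop :=
  bil d r r != 0 /\ forall l, inL l -> inL (refl d r l).

Definition induces_pm_id (d : nat) (r : 'cV[rat]_21) : Prop :=
  exists2 eps : rat, (eps == 1) || (eps == -1) &
    forall x, inLdual d x -> inL (refl d r x - eps *: x).

Definition is_div (d : nat) (r : 'cV[rat]_21) (n : nat) : Prop :=
  (0 < n)%N /\ (forall l, inL l -> exists k : int, bil d l r = n%:R * k%:~R) /\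
  exists2 l, inL l & bil d l r = n%:R.

From mathcomp Require Import all_boot all_order all_algebra.
From mathcomp Require Import ring zify.
From Stdlib Require Import Classical.
Import Order.TTheory GRing.Theory Num.Theory.
Local Open Scope ring_scope.

(* Write L = M (+) Ze with M = 2U (+) 2E_8(-1) unimodular, e^2 = -2d, n = r^2, and
   let t be the e-coordinate of r. Unimodularity of M gives L^v = L + Z x0 with
   x0 = e/(2d), and sigma_r(x0) = x0 + (2t/n) r. Since sigma_r preserves L, every
   2(l,r)/n is an integer, and since r is primitive, c r in L forces c in Z.
   If sigma_r = id on L^v/L, then (2t/n) r is in L, hence 2/n is an integer; as n
   is even, n = +-2. If sigma_r = -id, then 2 x0 + (2t/n) r is in L; reading off its
   coordinates shows that 2d/n and n/(2d) = (1/d + 2t^2/n)(n/2) - t^2 are integers,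
   so n = +-2d, and then (L, r) lies in dZ and contains (+-r, r) = 2d, so
   div(r) is d or 2d. Conversely, r = d b + t e with b in M, and
   n = d^2 b^2 - 2d t^2 makes (1 +- t^2)/d = +-b^2/2 an integer. *)

(* Indices k >= 21 silently read coordinate 0. *)
Definition entry (x : 'cV[rat]_21) (k : nat) : rat := x (inord k) 0.
Arguments entry : simpl never.

Lemma entryE (x : 'cV[rat]_21) (i : 'I_21) : x i 0 = entry x i.
Proof. by rewrite /entry inord_val. Qed.

Lemma entryD x y k : entry (x + y) k = entry x k + entry y k.
Proof. by rewrite /entry mxE. Qed.

Lemma entryZ (c : rat) x k : entry (c *: x) k = c * entry x k.
Proof. by rewrite /entry mxE. Qed.

Lemma entryB x y k : entry (x - y) k = entry x k - entry y k.
Proof. by rewrite /entry !mxE. Qed.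

Definition colv (f : nat -> rat) : 'cV[rat]_21 := \col_i f i.

Lemma entry_colv f k : (k < 21)%N -> entry (colv f) k = f k.
Proof. by move=> lt_k21; rewrite /entry mxE inordK. Qed.

Lemma inL_entry x k : inL x -> entry x k \is a Num.int.
Proof. by move=> xL; apply: xL. Qed.

Lemma inL_entries x :
  (forall k, (k < 20)%N -> entry x k \is a Num.int) ->
  entry x 20 \is a Num.int -> inL x.
Proof.
move=> x_lt20 x_20 i; rewrite entryE.
by have := ltn_ord i; rewrite ltnS leq_eqVlt => /orP[/eqP-> | /x_lt20].
Qed.

Lemma inLD x y : inL x -> inL y -> inL (x + y).
Proof. by move=> xL yL i; rewrite mxE rpredD. Qed.

Lemma inLB x y : inL x -> inL y -> inL (x - y).
Proof. by move=> xL yL i; rewrite !mxE rpredB. Qed.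

Lemma inLZ (c : rat) x : c \is a Num.int -> inL x -> inL (c *: x).
Proof. by move=> cZ xL i; rewrite mxE rpredM. Qed.

Lemma int_unit_pm1 (m : rat) :
  m != 0 -> m \is a Num.int -> m^-1 \is a Num.int -> m = 1 \/ m = -1.
Proof.
move=> m0 mZ mVZ.
have m_le1 : `|m| <= 1.
  have := norm_intr_ge1 mVZ (invr_neq0 m0).
  by rewrite normfV invr_ge1 ?unitfE ?normr_eq0 ?normr_gt0.
have /eqP : `|m| = 1 by apply/eqP; rewrite eq_le m_le1 norm_intr_ge1.
by rewrite -sqr_norm_eq1 sqrf_eq1 => /orP[] /eqP; [left | right].
Qed.

Lemma int_even_or_odd (k : int) : exists h : int, k = 2 * h \/ k = 2 * h + 1.
Proof.
exists (k %/ 2)%Z; have := divz_eq k 2; have := modz_ge0 k (isT : 2 != 0 :> int).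
by have := ltz_pmod k (isT : 0 < 2 :> int); lia.
Qed.

Lemma primitive_scale_int r c : primitive r -> inL (c *: r) -> c \is a Num.int.
Proof.
case=> rL [_ r_prim] crL.
have q0 : (denq c)%:~R != 0 :> rat by rewrite intr_eq0 denq_neq0.
have coprime_qp : coprimez (denq c) (numq c).
  by rewrite /coprimez /gcdz gcdnC; apply: coprime_num_den.
pose v := ((denq c)%:~R)^-1 *: r.
have vL : inL v.
  move=> i; have [m rE] := intrP (rL i); have [z crE] := intrP (crL i).
  have /dvdzP [k mE] : (denq c %| m)%Z.
    rewrite -(Gauss_dvdzr _ coprime_qp); apply/dvdzP; exists z; apply/eqP.
    rewrite -(eqr_int rat) !intrM -rE -crE mxE numqE; apply/eqP; ring.
  by rewrite mxE rE mE intrM mulrC mulfK ?intr_int.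
have /r_prim : r = (denq c)%:~R *: v by rewrite scalerA mulfV ?scale1r.
rewrite gtr0_norm ?ltr0z ?denq_gt0 // -[1]/(1%:~R) => /(_ (intr_int _ _) vL).
by move/eqP; rewrite eqr_int Qint_def.
Qed.

Definition e8_form (X Y : nat -> rat) : rat :=
  - 2 * (X 0 * Y 0 + X 1 * Y 1 + X 2 * Y 2 + X 3 * Y 3
         + X 4 * Y 4 + X 5 * Y 5 + X 6 * Y 6 + X 7 * Y 7)
  + X 0 * Y 1 + X 1 * Y 0 + X 1 * Y 2 + X 2 * Y 1 + X 2 * Y 3 + X 3 * Y 2
  + X 3 * Y 4 + X 4 * Y 3 + X 4 * Y 5 + X 5 * Y 4 + X 5 * Y 6 + X 6 * Y 5
  + X 4 * Y 7 + X 7 * Y 4.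

Definition form21 (d : nat) (X Y : nat -> rat) : rat :=
  X 0 * Y 1 + X 1 * Y 0 + X 2 * Y 3 + X 3 * Y 2
  + e8_form (fun i => X (4 + i)%N) (fun i => Y (4 + i)%N)
  + e8_form (fun i => X (12 + i)%N) (fun i => Y (12 + i)%N)
  - (2 * d)%:R * X 20 * Y 20.

Lemma sum_ord21 (F : 'I_21 -> rat) : \sum_(i < 21) F i =
  F (@Ordinal 21 0 isT) + F (@Ordinal 21 1 isT) + F (@Ordinal 21 2 isT)
  + F (@Ordinal 21 3 isT) + F (@Ordinal 21 4 isT) + F (@Ordinal 21 5 isT)
  + F (@Ordinal 21 6 isT) + F (@Ordinal 21 7 isT) + F (@Ordinal 21 8 isT)
  + F (@Ordinal 21 9 isT) + F (@Ordinal 21 10 isT) + F (@Ordinal 21 11 isT)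
  + F (@Ordinal 21 12 isT) + F (@Ordinal 21 13 isT) + F (@Ordinal 21 14 isT)
  + F (@Ordinal 21 15 isT) + F (@Ordinal 21 16 isT) + F (@Ordinal 21 17 isT)
  + F (@Ordinal 21 18 isT) + F (@Ordinal 21 19 isT) + F (@Ordinal 21 20 isT).
Proof.
rewrite !big_ord_recl big_ord0 addr0 !addrA.
by do 20 (congr (_ + _); last by congr F; apply: val_inj); congr F; apply: val_inj.
Qed.

Lemma bilE d x y : bil d x y = form21 d (entry x) (entry y).
Proof.
rewrite /bil mxE.
under eq_bigr => j _ do rewrite mxE entryE.
under eq_bigr => j _ do under eq_bigr => i _ do rewrite !mxE !entryE.
by rewrite !sum_ord21 /gram_entry /form21 /e8_form /=; ring.
Qed.

Lemma bilC d x y : bil d x y = bil d y x.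
Proof. by rewrite !bilE /form21 /e8_form; ring. Qed.

Lemma bilDl d x1 x2 y : bil d (x1 + x2) y = bil d x1 y + bil d x2 y.
Proof. by rewrite /bil linearD !mulmxDl mxE. Qed.

Lemma bilZl d c x y : bil d (c *: x) y = c * bil d x y.
Proof. by rewrite /bil linearZ -!scalemxAl mxE. Qed.

Lemma bilBl d x1 x2 y : bil d (x1 - x2) y = bil d x1 y - bil d x2 y.
Proof. by rewrite bilDl -scaleN1r bilZl mulN1r. Qed.

Lemma bilDr d x y1 y2 : bil d x (y1 + y2) = bil d x y1 + bil d x y2.
Proof. by rewrite !(bilC d x) bilDl. Qed.

Lemma bilZr d c x y : bil d x (c *: y) = c * bil d x y.
Proof. by rewrite !(bilC d x) bilZl. Qed.

Lemma e8_form_even X :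
  (forall i, X i \is a Num.int) -> e8_form X X / 2 \is a Num.int.
Proof.
move=> XZ; have -> : e8_form X X / 2 =
    X 0 * X 1 + X 1 * X 2 + X 2 * X 3 + X 3 * X 4 + X 4 * X 5 + X 5 * X 6
    + X 4 * X 7 - (X 0 ^+ 2 + X 1 ^+ 2 + X 2 ^+ 2 + X 3 ^+ 2
                   + X 4 ^+ 2 + X 5 ^+ 2 + X 6 ^+ 2 + X 7 ^+ 2).
  by rewrite /e8_form; field.
by rewrite ?(rpredB, rpredD, rpredM, rpredX).
Qed.

Lemma bil_even d x : inL x -> bil d x x / 2 \is a Num.int.
Proof.
move=> xL; have xZ k : entry x k \is a Num.int by apply: inL_entry.
rewrite bilE /form21.
set a := e8_form _ _; set b := e8_form _ _.
have aZ : a / 2 \is a Num.int by apply: e8_form_even.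
have bZ : b / 2 \is a Num.int by apply: e8_form_even.
clearbody a b.
have -> : (entry x 0 * entry x 1 + entry x 1 * entry x 0 + entry x 2 * entry x 3
    + entry x 3 * entry x 2 + a + b - (2 * d)%:R * entry x 20 * entry x 20) / 2 =
    entry x 0 * entry x 1 + entry x 2 * entry x 3 + a / 2 + b / 2
    - d%:R * entry x 20 ^+ 2.
  by rewrite natrM; field.
by rewrite ?(rpredB, rpredD) // ?(rpredM, rpredX, natr_int, xZ).
Qed.

(* On U each coordinate is dual to its partner; on E_8(-1) the dual basis is minus
   the inverse Cartan matrix. *)
Definition e8_cartan_inv : seq (seq int) := [::
  [:: 2; 3;  4;  5;  6;  4;  2;  3];
  [:: 3; 6;  8; 10; 12;  8;  4;  6];
  [:: 4; 8; 12; 15; 18; 12;  6;  9];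
  [:: 5; 10; 15; 20; 24; 16; 8; 12];
  [:: 6; 12; 18; 24; 30; 20; 10; 15];
  [:: 4; 8; 12; 16; 20; 14;  7; 10];
  [:: 2; 4;  6;  8; 10;  7;  4;  5];
  [:: 3; 6;  9; 12; 15; 10;  5;  8]].

Definition dual_vec (i : nat) : 'cV[rat]_21 := colv (fun k =>
  if (i < 4)%N then (k == (if odd i then i.-1 else i.+1))%:R
  else if [&& (4 <= k < 20)%N & (i < 12)%N == (k < 12)%N] then
    - (nth 0 (nth [::] e8_cartan_inv ((i - 4) %% 8)) ((k - 4) %% 8))%:~R
  else 0).

Lemma dual_vec_inL i : inL (dual_vec i).
Proof.
move=> k; rewrite mxE.
by do 2 case: ifP => _; rewrite ?rpredN ?natr_int ?intr_int ?rpred0.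
Qed.

Lemma bil_dual_vec d x i : (i < 20)%N -> bil d x (dual_vec i) = entry x i.
Proof.
move=> lt_i20; rewrite bilE /form21 /e8_form !entry_colv //.
by do 20 (case: i lt_i20 => [|i] lt_i20; first by rewrite /=; ring).
Qed.

Definition e20 : 'cV[rat]_21 := colv (fun k => (k == 20)%:R).

Lemma e20_inL : inL e20.
Proof. by move=> i; rewrite mxE natr_int. Qed.

Lemma entry_e20 k : (k < 20)%N -> entry e20 k = 0.
Proof. by move=> lt_k20; rewrite entry_colv ?ltn_eqF // ltnW. Qed.

Lemma entry20_e20 : entry e20 20 = 1.
Proof. by rewrite entry_colv. Qed.

Lemma bil_e20 d x : bil d x e20 = - (2 * d)%:R * entry x 20.
Proof. by rewrite bilE /form21 /e8_form !entry_colv //=; ring. Qed.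

Definition disc_gen (d : nat) : 'cV[rat]_21 := ((2 * d)%:R)^-1 *: e20.

Lemma entry_disc_gen d k : (k < 20)%N -> entry (disc_gen d) k = 0.
Proof.
by move=> lt_k20; rewrite entryZ entry_e20 ?mulr0.
Qed.

Lemma entry20_disc_gen d : entry (disc_gen d) 20 = ((2 * d)%:R)^-1.
Proof. by rewrite entryZ entry20_e20 mulr1. Qed.

Lemma natr_2d_neq0 d : (0 < d)%N -> (2 * d)%:R != 0 :> rat.
Proof. by move=> d_gt0; rewrite pnatr_eq0 muln_eq0 /= -lt0n. Qed.

Lemma bil_disc_gen d l : (0 < d)%N -> bil d (disc_gen d) l = - entry l 20.
Proof.
move=> d_gt0; rewrite bilC bilZr bil_e20 mulNr mulrN mulrA.
by rewrite mulVf ?mul1r ?natr_2d_neq0.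
Qed.

Lemma inLdual_disc_gen d : (0 < d)%N -> inLdual d (disc_gen d).
Proof. by move=> d_gt0 l lL; rewrite bil_disc_gen // rpredN inL_entry. Qed.

Lemma inLdual_entries d x : inLdual d x ->
  (forall i, (i < 20)%N -> entry x i \is a Num.int) /\
  (2 * d)%:R * entry x 20 \is a Num.int.
Proof.
move=> xLV; split=> [i lt_i20|].
  by rewrite -(bil_dual_vec d x _ lt_i20); apply/xLV/dual_vec_inL.
by rewrite -rpredN -mulNr -bil_e20; apply/xLV/e20_inL.
Qed.

Lemma inLdual_decomp d x : (0 < d)%N -> inLdual d x ->
  exists2 k : rat, k \is a Num.int & inL (x - k *: disc_gen d).
Proof.
move=> d_gt0 /inLdual_entries [x_lt20 kZ]; exists ((2 * d)%:R * entry x 20) => //.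
apply: inL_entries => [i lt_i20|].
  by rewrite entryB entryZ entry_disc_gen ?mulr0 ?subr0 ?x_lt20.
by rewrite entryB entryZ entry20_disc_gen mulrAC divff ?mul1r ?subrr ?natr_2d_neq0.
Qed.

Lemma refl_linear d r m k x : refl d r (m + k *: x) = refl d r m + k *: refl d r x.
Proof.
apply/matrixP => i j; rewrite /refl bilDl bilZl !mxE; ring.
Qed.

Lemma induces_pm_id_disc_gen d r : (0 < d)%N -> refl_in_OL d r ->
  induces_pm_id d r <->
  exists2 eps : rat, (eps == 1) || (eps == -1) &
    inL (refl d r (disc_gen d) - eps *: disc_gen d).
Proof.
move=> d_gt0 [_ reflL]; split=> [[eps eps_pm epsL] | [eps eps_pm epsL]].
  by exists eps => //; apply/epsL/inLdual_disc_gen.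
exists eps => // x /(inLdual_decomp _ _ d_gt0) [k kZ mL].
have epsZ : eps \is a Num.int by case/orP: eps_pm => /eqP->; rewrite ?rpredN.
rewrite -[x](subrK (k *: disc_gen d)) refl_linear.
set m := x - _; set x0 := disc_gen d.
have -> : refl d r m + k *: refl d r x0 - eps *: (m + k *: x0) =
    (refl d r m - eps *: m) + k *: (refl d r x0 - eps *: x0).
  by apply/matrixP => i j; rewrite !mxE; ring.
apply: inLD; last exact: inLZ.
by apply: inLB; [apply: reflL | apply: inLZ].
Qed.

Lemma is_div_dvd d r k l : is_div d r k -> inL l -> bil d l r / k%:R \is a Num.int.
Proof.
case=> k_gt0 [dvd_k _] /dvd_k [z ->].
by rewrite mulrC mulKf ?intr_int // pnatr_eq0 -lt0n.
Qed.

Lemma is_div_m_or_2m d r (m : nat) : (0 < m)%N ->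
  (forall l, inL l -> bil d l r / m%:R \is a Num.int) ->
  (exists2 rho, inL rho & bil d rho r = (2 * m)%:R) ->
  is_div d r m \/ is_div d r (2 * m).
Proof.
move=> m_gt0 dvd_m [rho rhoL rhoE].
have m0 : (m%:R : rat) != 0 by rewrite pnatr_eq0 -lt0n.
have m2E : (2 * m)%:R = 2 * m%:R :> rat by rewrite natrM.
have dvd_mE l : inL l -> exists k : int, bil d l r = m%:R * k%:~R.
  by move=> /dvd_m /intrP [k kE]; exists k; rewrite -kE mulrC divfK.
case: (classic (exists2 l, inL l & bil d l r / (2 * m)%:R \notin Num.int))
  => [[l lL not_dvd] | dvd_2m]; last first.
  right; split; first by rewrite muln_gt0.
  split; last by exists rho.
  move=> l lL; have /intrP [k kE] : bil d l r / (2 * m)%:R \is a Num.int.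
    by apply/negPn/negP => not_dvd; apply: dvd_2m; exists l.
  by exists k; rewrite -kE mulrC divfK ?m2E ?mulf_neq0.
left; do 2 split => //.
have [k lE] := dvd_mE l lL; have [h [kE | kE]] := int_even_or_odd k.
  have hE : bil d l r / (2 * m)%:R = h%:~R by rewrite lE kE m2E intrM; field.
  by move: not_dvd; rewrite hE intr_int.
exists (l - h%:~R *: rho); first by apply: inLB; last apply: inLZ; rewrite ?intr_int.
by rewrite bilBl bilZl rhoE lE kE m2E intrD intrM; ring.
Qed.

Section ReflectionOnDiscriminant.

Variables (d : nat) (r : 'cV[rat]_21).
Hypotheses (d_gt0 : (0 < d)%N) (r_prim : primitive r) (r_refl : refl_in_OL d r).

Local Notation n := (bil d r r).
Local Notation t := (entry r 20).
Local Notation D := (d%:R : rat).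
Local Notation x0 := (disc_gen d).

Let rL : inL r := r_prim.1.
Let n0 : n != 0 := r_refl.1.
Let two0 : (2 : rat) != 0. Proof. by []. Qed.
Let D0 : D != 0. Proof. by rewrite pnatr_eq0 -lt0n. Qed.
Let DE : (2 * d)%:R = 2 * D :> rat. Proof. exact: natrM. Qed.

Lemma refl_coef_int l : inL l -> 2 * bil d l r / n \is a Num.int.
Proof.
move=> lL; apply: (primitive_scale_int _ _ r_prim).
have -> : (2 * bil d l r / n) *: r = l - refl d r l by rewrite /refl opprB addrC subrK.
by apply: inLB => //; apply: r_refl.2.
Qed.

Lemma refl_coef_entry_int i : (i < 20)%N -> 2 * entry r i / n \is a Num.int.
Proof.
move=> lt_i20; rewrite -(bil_dual_vec d r _ lt_i20) bilC.
exact/refl_coef_int/dual_vec_inL.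
Qed.

Lemma int_of_scaled_entries c :
  (forall i, (i < 20)%N -> c * entry r i \is a Num.int) -> c * t \is a Num.int ->
  c \is a Num.int.
Proof.
move=> c_lt20 c20; apply: (primitive_scale_int _ _ r_prim).
by apply: inL_entries => [i lt_i20|]; rewrite entryZ; [apply: c_lt20 | ].
Qed.

Lemma refl_disc_gen : refl d r x0 = x0 + (2 * t / n) *: r.
Proof. by rewrite /refl bil_disc_gen // mulrN mulNr scaleNr opprK. Qed.

Lemma disc_gen_fixed_iff : inL (refl d r x0 - x0) <-> n = 2 \/ n = -2.
Proof.
rewrite refl_disc_gen addrC addKr; split=> [ctrL | n2].
  have ctZ := primitive_scale_int _ _ r_prim ctrL.
  have inv_halfZ : (n / 2)^-1 \is a Num.int.
    rewrite invf_div; apply: int_of_scaled_entries; last by rewrite mulrAC.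
    by move=> i lt_i20; rewrite mulrAC refl_coef_entry_int.
  have half_ne0 : n / 2 != 0 by rewrite mulf_neq0 ?invr_eq0.
  have [half1 | half1] := int_unit_pm1 _ half_ne0 (bil_even d r rL) inv_halfZ.
    by left; rewrite -[n](divfK two0) half1 mul1r.
  by right; rewrite -[n](divfK two0) half1 mulN1r.
apply: inLZ => //; have tZ := inL_entry r 20 rL.
by case: n2 => ->; [rewrite mulrAC divff | rewrite invrN mulrN mulrAC divff ?rpredN];
  rewrite ?mul1r.
Qed.

Lemma norm_of_disc_gen_negated :
  inL (refl d r x0 + x0) -> n = (2 * d)%:R \/ n = - (2 * d)%:R.
Proof.
rewrite refl_disc_gen => negL.
have c_lt20 i : (i < 20)%N -> 2 * t / n * entry r i \is a Num.int.
  move=> lt_i20; move: (inL_entry _ i negL).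
  by rewrite !entryD entryZ entry_disc_gen // add0r addr0.
have c20 : D^-1 + 2 * t ^+ 2 / n \is a Num.int.
  have -> : D^-1 + 2 * t ^+ 2 / n = (2 * D)^-1 + 2 * t / n * t + (2 * D)^-1.
    by field; rewrite ?n0 ?D0.
  by move: (inL_entry _ 20 negL); rewrite !entryD entryZ entry20_disc_gen DE.
have Dc_int : D * (2 * t / n) \is a Num.int.
  apply: int_of_scaled_entries => [i lt_i20|].
    by rewrite -mulrA rpredM ?natr_int ?c_lt20.
  have -> : D * (2 * t / n) * t = D * (D^-1 + 2 * t ^+ 2 / n) - 1 by field; rewrite ?n0.
  by rewrite rpredB ?rpredM ?natr_int.
have q_int : 2 * D / n \is a Num.int.
  apply: int_of_scaled_entries => [i lt_i20|].
    have -> : 2 * D / n * entry r i = D * (2 * entry r i / n) by field; rewrite ?n0.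
    by rewrite rpredM ?natr_int ?refl_coef_entry_int.
  by have -> : 2 * D / n * t = D * (2 * t / n) by field; rewrite ?n0.
have qV_int : (2 * D / n)^-1 \is a Num.int.
  have -> : (2 * D / n)^-1 = (D^-1 + 2 * t ^+ 2 / n) * (n / 2) - t ^+ 2.
    by field; rewrite ?n0.
  by rewrite rpredB ?rpredX ?inL_entry // rpredM ?bil_even.
have q0 : 2 * D / n != 0 by rewrite !mulf_neq0 ?invr_eq0.
have nE : n = 2 * D / (2 * D / n) by field; rewrite ?n0.
rewrite DE nE; case: (int_unit_pm1 _ q0 q_int qV_int) => ->.
  by left; rewrite invr1 mulr1.
by right; rewrite invrN invr1 mulrN1.
Qed.

Lemma is_div_of_norm :
  n = (2 * d)%:R \/ n = - (2 * d)%:R -> is_div d r d \/ is_div d r (2 * d).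
Proof.
move=> n_pm; apply: is_div_m_or_2m => // [l lL|].
  have := refl_coef_int l lL; case: n_pm => ->; rewrite DE.
    by have -> : 2 * bil d l r / (2 * D) = bil d l r / D by field.
  have -> : 2 * bil d l r / - (2 * D) = - (bil d l r / D) by field.
  by rewrite rpredN.
case: n_pm => nE; first by exists r.
by exists ((-1) *: r); [apply: inLZ; rewrite ?rpredN1 | rewrite bilZl nE mulN1r opprK].
Qed.

Lemma disc_gen_negated_of_div :
  n = (2 * d)%:R \/ n = - (2 * d)%:R -> is_div d r d \/ is_div d r (2 * d) ->
  inL (refl d r x0 + x0).
Proof.
move=> n_pm div_r.
have [sg sg_pm nE] : exists2 sg : rat, sg = 1 \/ sg = -1 & n = 2 * D * sg.
  rewrite -DE; case: n_pm => ->; first by exists 1; [left | rewrite mulr1].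
  by exists (-1); [right | rewrite mulrN1].
have sg_int : sg \is a Num.int by case: sg_pm => ->; rewrite ?rpredN1.
have dvdD l : inL l -> bil d l r / D \is a Num.int.
  move=> lL; case: div_r => /is_div_dvd /(_ lL) // half_int.
  have -> : bil d l r / D = 2 * (bil d l r / (2 * d)%:R) by rewrite DE; field.
  by rewrite rpredM ?natr_int.
have entryD_int i : (i < 20)%N -> entry r i / D \is a Num.int.
  by move=> lt_i20; rewrite -(bil_dual_vec d r _ lt_i20) bilC; apply/dvdD/dual_vec_inL.
have [b [bL b20 rE]] : exists b, [/\ inL b, entry b 20 = 0 & r = D *: b + t *: e20].
  exists (D^-1 *: (r - t *: e20)); split.
  - apply: inL_entries => [i lt_i20|].
      by rewrite entryZ entryB entryZ entry_e20 // mulr0 subr0 mulrC entryD_int.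
    by rewrite entryZ entryB entryZ entry20_e20 mulr1 subrr mulr0.
  - by rewrite entryZ entryB entryZ entry20_e20 mulr1 subrr mulr0.
  - by rewrite scalerA mulfV // scale1r subrK.
have nb : n = D ^+ 2 * bil d b b - 2 * D * t ^+ 2.
  rewrite {1 2}rE bilDl !bilDr !bilZl !bilZr (bilC d e20) !bil_e20 b20 entry20_e20 DE.
  by ring.
have half_bE : bil d b b / 2 = (sg + t ^+ 2) / D.
  have bbE : bil d b b = (n + 2 * D * t ^+ 2) / D ^+ 2 by rewrite nb; field.
  by rewrite bbE nE; field.
rewrite refl_disc_gen; apply: inL_entries => [i lt_i20|].
  rewrite !entryD entryZ entry_disc_gen // add0r addr0.
  have -> : 2 * t / n * entry r i = sg * t * (entry r i / D).
    by rewrite nE; case: sg_pm => ->; field.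
  exact: rpredM (rpredM sg_int (inL_entry r 20 rL)) (entryD_int i lt_i20).
rewrite !entryD entryZ entry20_disc_gen.
have -> : ((2 * d)%:R)^-1 + 2 * t / n * t + ((2 * d)%:R)^-1 = sg * (bil d b b / 2).
  by rewrite half_bE nE DE; case: sg_pm => ->; field.
by rewrite rpredM ?bil_even.
Qed.

Lemma disc_gen_negated_iff :
  inL (refl d r x0 + x0) <->
  (n = (2 * d)%:R \/ n = - (2 * d)%:R) /\ (is_div d r d \/ is_div d r (2 * d)).
Proof.
split=> [/norm_of_disc_gen_negated n_pm | [n_pm div_r]].
  by split; last exact: is_div_of_norm.
exact: disc_gen_negated_of_div.
Qed.

End ReflectionOnDiscriminant.

Theorem corollary4p4 (d : nat) (r : 'cV[rat]_21) :
  (1 <= d)%N -> primitive r -> refl_in_OL d r ->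
  (induces_pm_id d r <->
     (bil d r r = 2 \/ bil d r r = -2 \/
      ((bil d r r = (2 * d)%:R \/ bil d r r = - (2 * d)%:R) /\
       (is_div d r d \/ is_div d r (2 * d))))).
Proof.
move=> d_gt0 r_prim r_refl.
have fixP := disc_gen_fixed_iff d r d_gt0 r_prim r_refl.
have negP := disc_gen_negated_iff d r d_gt0 r_prim r_refl.
apply: iff_trans (induces_pm_id_disc_gen d r d_gt0 r_refl) _; split.
  case=> eps /orP[] /eqP ->.
    by rewrite scale1r => /fixP [->|->]; [left | right; left].
  by rewrite scaleN1r opprK => /negP; right; right.
case=> [n2 | [n2 | n_div]]; [exists 1 | exists 1 | exists (-1)];
  rewrite ?eqxx ?orbT ?scale1r ?scaleN1r ?opprK //.
- by apply/fixP; left.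
- by apply/fixP; right.
- exact/negP.
Qed.
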